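(* There is no binary self-orthogonal $[110,7,54]$ code.
   Context: A binary linear code $C$ is self-orthogonal if $C\subseteq C^\perp$. *)

From HB Require Import structures.
From mathcomp Require Import all_boot all_order all_algebra.
Set Implicit Arguments. Unset Strict Implicit. Unset Printing Implicit Defensive.
Import GRing.Theory.
Local Open Scope ring_scope.


Definition hwt (n : nat) (x : 'rV['F_2]_n) : nat := #|[set i | x 0 i != 0]|.
Definition hdist (n : nat) (x y : 'rV['F_2]_n) : nat := #|[set i | x 0 i != y 0 i]|.

Definition bdot (n : nat) (x y : 'rV['F_2]_n) : 'F_2 := \sum_(i < n) x 0 i * y 0 i.

Definition dual_code (n : nat) (C : {vspace 'rV['F_2]_n}) : pred 'rV['F_2]_n :=
  fun x => [forall c : 'rV['F_2]_n, (c \in C) ==> (bdot x c == 0)].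

Definition self_orthogonal (n : nat) (C : {vspace 'rV['F_2]_n}) : Prop :=
  {subset C <= dual_code C}.

Definition min_distance_eq (n : nat) (C : {vspace 'rV['F_2]_n}) (d : nat) : Prop :=
  (exists x, exists y, [/\ x \in C, y \in C, x != y & hdist x y = d]) /\
  (forall x y, x \in C -> y \in C -> x != y -> (d <= hdist x y)%N).

Definition is_nkd_code (n k d : nat) (C : {vspace 'rV['F_2]_n}) : Prop :=
  \dim C = k /\ min_distance_eq C d.

(* In a self-orthogonal binary code all weights are even and
   wt (x + y) = wt x + wt y (mod 4), so the doubly-even codewords form a
   subcode D of index at most 2; for a [110,7,54] code #|D| >= 64.  Every
   nonzero word of D has weight at least 56, the least multiple of 4 above 54.
   But each coordinate is nonzero on at most half of the additive code D, so
   the Plotkin bound 2 * 56 * (#|D| - 1) <= 110 * #|D| forces #|D| <= 56. *)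

From mathcomp Require Import all_boot all_order all_algebra.
From mathcomp Require Import finfield zify.
Import GRing.Theory.
Set Implicit Arguments. Unset Strict Implicit.

Lemma F2_cases (a : 'F_2) : a = 0%R \/ a = 1%R.
Proof. by case: a => [[|[|k]] //= lt_a2]; [left | right]; apply: val_inj. Qed.

Lemma card_set_sum_bool (T : finType) (P : pred T) :
  #|[set i | P i]| = \sum_i P i.
Proof.
rewrite -sum1_card big_mkcond /=; apply: eq_bigr => i _.
by rewrite inE; case: (P i).
Qed.

Lemma leq_card_sums_in (V : finZmodType) (A B : {set V}) :
  {in A &, forall x y, (x + y)%R \in B} -> #|A| <= #|B|.
Proof.
move=> sumAB; have [->|[z Az]] := set_0Vmem A; first by rewrite cards0.
rewrite -(card_imset A (addIr z)); apply: subset_leq_card.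
by apply/subsetP => _ /imsetP[x Ax ->]; apply: sumAB.
Qed.

Definition overlap (n : nat) (x y : 'rV['F_2]_n) : nat :=
  #|[set i | (x 0%R i * y 0%R i)%R != 0%R]|.

Section HammingWeight.

Variable n : nat.
Implicit Types x y : 'rV['F_2]_n.

Lemma hdistr0 x : hdist x 0%R = hwt x.
Proof. by apply: eq_card => i; rewrite !inE mxE. Qed.

Lemma hwtD x y : hwt (x + y)%R + 2 * overlap x y = hwt x + hwt y.
Proof.
rewrite /hwt /overlap !card_set_sum_bool big_distrr -!big_split /=.
apply: eq_bigr => i _; rewrite mxE.
by case: (F2_cases (x 0%R i)) => ->; case: (F2_cases (y 0%R i)) => ->.
Qed.

Lemma overlapxx x : overlap x x = hwt x.
Proof.
rewrite /overlap /hwt !card_set_sum_bool; apply: eq_bigr => i _.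
by case: (F2_cases (x 0%R i)) => ->.
Qed.

Lemma bdot_overlap x y : bdot x y = (overlap x y)%:R%R.
Proof.
rewrite /bdot /overlap card_set_sum_bool natr_sum; apply: eq_bigr => i _.
by case: (F2_cases (x 0%R i)) => ->; case: (F2_cases (y 0%R i)) => ->;
  rewrite ?(mul0r, mulr0, mul1r).
Qed.

End HammingWeight.

Section PlotkinBound.

Variables (n : nat) (D : {set 'rV['F_2]_n}).
Hypothesis addD : {in D &, forall x y, (x + y)%R \in D}.

(* Adding a fixed word of D with coordinate i set maps the words of D with
   coordinate i set injectively to words of D with coordinate i clear. *)
Lemma card_coord_neq0_le (i : 'I_n) : 2 * #|[set x in D | x 0%R i != 0%R]| <= #|D|.
Proof.
set D1 := [set x in D | x 0%R i != 0%R].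
have subD1 : D1 \subset D by apply/subsetP => x; rewrite inE => /andP[].
rewrite -(cardsID D1 D) (setIidPr subD1) mul2n -addnn leq_add2l.
apply: leq_card_sums_in => x y; rewrite !inE => /andP[Dx x_i] /andP[Dy y_i].
rewrite addD // andbT mxE.
by case: (F2_cases (x 0%R i)) x_i => -> //; case: (F2_cases (y 0%R i)) y_i => ->.
Qed.

Lemma sum_hwt_le : 2 * \sum_(x in D) hwt x <= n * #|D|.
Proof.
have -> : \sum_(x in D) hwt x = \sum_i #|[set x in D | x 0%R i != 0%R]|.
  under eq_bigr => x _ do rewrite /hwt card_set_sum_bool.
  rewrite exchange_big /=; apply: eq_bigr => i _.
  rewrite -sum1_card big_mkcond [RHS]big_mkcond /=; apply: eq_bigr => x _.
  by rewrite !inE; case: (x \in D); case: (x 0%R i != 0%R).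
rewrite big_distrr -[n in n * _]card_ord -sum_nat_const.
by apply: leq_sum => i _; apply: card_coord_neq0_le.
Qed.

Lemma plotkin_bound d :
  {in D, forall x, x != 0%R -> d <= hwt x} -> 2 * d * (#|D| - 1) <= n * #|D|.
Proof.
move=> wtD; apply: leq_trans sum_hwt_le; rewrite -mulnA leq_pmul2l //.
have card_nz : #|D| - 1 <= #|D :\ 0%R|.
  by rewrite (cardsD1 0%R D); case: (_ \in D); rewrite ?add1n ?subSS ?subn0 ?leq_subr.
apply: leq_trans (leq_mul (leqnn d) card_nz) _.
rewrite mulnC -sum_nat_const big_mkcond [leqRHS]big_mkcond /=.
apply: leq_sum => x _; rewrite !inE.
by case: ifP => // /andP[x_neq0 Dx]; rewrite Dx wtD.
Qed.

End PlotkinBound.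

Section SelfOrthogonalCode.

Variables (n : nat) (C : {vspace 'rV['F_2]_n}).
Hypothesis soC : self_orthogonal C.
Implicit Types x y : 'rV['F_2]_n.

Lemma self_orthogonal_overlap_even x y : x \in C -> y \in C -> 2 %| overlap x y.
Proof.
move=> Cx Cy; have := soC Cx; rewrite unfold_in => /forallP/(_ y)/implyP/(_ Cy).
by rewrite bdot_overlap (dvdn_pcharf (pchar_Fp (isT : prime 2))).
Qed.

Lemma self_orthogonal_hwt_even x : x \in C -> 2 %| hwt x.
Proof. by move=> Cx; rewrite -overlapxx self_orthogonal_overlap_even. Qed.

Lemma self_orthogonal_hwtD x y :
  x \in C -> y \in C -> hwt (x + y)%R = hwt x + hwt y %[mod 4].
Proof.
move=> Cx Cy; rewrite -hwtD.
by case/dvdnP: (self_orthogonal_overlap_even Cx Cy) => k ->; lia.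
Qed.

Definition doubly_even_subcode : {set 'rV['F_2]_n} :=
  [set x | (x \in C) && (4 %| hwt x)].

Lemma doubly_even_subcodeD :
  {in doubly_even_subcode &, forall x y, (x + y)%R \in doubly_even_subcode}.
Proof.
move=> x y; rewrite !inE => /andP[Cx wt_x] /andP[Cy wt_y].
rewrite memvD //=; have := self_orthogonal_hwtD Cx Cy; lia.
Qed.

(* Adding a fixed singly-even codeword maps the singly-even codewords
   injectively into the doubly-even subcode. *)
Lemma card_doubly_even_subcode : #|C| <= 2 * #|doubly_even_subcode|.
Proof.
set E := [set x | (x \in C) && ~~ (4 %| hwt x)].
have -> : #|C| = #|doubly_even_subcode| + #|E|.
  rewrite -(cardID [pred x | 4 %| hwt x] C).
  by congr (_ + _); apply: eq_card => x; rewrite !inE andbC.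
rewrite mul2n -addnn leq_add2l; apply: leq_card_sums_in => x y.
rewrite !inE => /andP[Cx wt_x] /andP[Cy wt_y]; rewrite memvD //=.
have := self_orthogonal_hwtD Cx Cy.
have := self_orthogonal_hwt_even Cx; have := self_orthogonal_hwt_even Cy; lia.
Qed.

End SelfOrthogonalCode.

Theorem proposition6p5 :
  ~ exists C : {vspace 'rV['F_2]_110}, @is_nkd_code 110 7 54 C /\ self_orthogonal C.
Proof.
move=> [C [[dimC [_ min_dist]] soC]].
have cardC : #|C| = 128 by rewrite card_vspace dimC card_Fp.
have wtD : {in doubly_even_subcode C, forall x, x != 0%R -> 56 <= hwt x}.
  move=> x; rewrite inE => /andP[Cx wt_x] x_neq0.
  by have := min_dist x 0%R Cx (mem0v C) x_neq0; rewrite hdistr0; lia.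
have := plotkin_bound (doubly_even_subcodeD soC) wtD.
have := card_doubly_even_subcode soC.
lia.
Qed.
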